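(* Let $C$ be any logistic circuit structure over Boolean variables $X_1,\dots,X_k$, with parameter vector $\theta\in\mathbb{R}^m$ collecting its $m$ OR-gate wire parameters. Then there exists a feature map $\phi:[0,1]^k\to\mathbb{R}^{m'}$ depending only on the input $\mathbf{x}$ and the structure of $C$ (not on the parameters), and a linear correspondence by which the logistic circuit is a logistic regression model over these features: for every parameter setting, $\Pr(Y=1\mid\mathbf{x}) = 1/(1+\exp(-\phi(\mathbf{x})\cdot\theta'))$ for all $\mathbf{x}\in[0,1]^k$, where $\theta'$ is a vector whose entries are parameters of the circuit. That is, any logistic circuit model can be reduced to a logistic regression model over a particular feature set.
   Context: A logical circuit over Boolean variables $X_1,\dots,X_k$ is a rooted directed acyclic graph whose leaves are literals $X_i$ or $\neg X_i$ and whose inner nodes are AND gates or OR gates; each node represents a logical sentence. An AND gate is decomposable if its inputs mention pairwise disjoint sets of variables; an OR gate is deterministic if for every complete assignment at most one of its inputs is satisfied. A logistic circuit is a logical circuit whose root is an OR gate, with all AND gates decomposable and all OR gates deterministic, together with a real parameter on each input wire of each OR gate. For $\mathbf{x}\in[0,1]^k$, $\Pr_{\mathbf{x}}$ is the fully factorized distribution with $\Pr_{\mathbf{x}}(X_i=1)=x_i$, and $\Pr_{\mathbf{x}}(n)$ is the probability of the sentence of node $n$. For an OR gate $n$ with child $c$, the flow is $f(n,\mathbf{x},c)=\Pr_{\mathbf{x}}(c)/\Pr_{\mathbf{x}}(n)$ (taken to be $0$ if $\Pr_{\mathbf{x}}(n)=0$). The weight function: $g_n(\mathbf{x})=0$ for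 a leaf; $g_n(\mathbf{x})=\sum_i g_{c_i}(\mathbf{x})$ for an AND gate with children $c_i$; $g_n(\mathbf{x})=\sum_i f(n,\mathbf{x},c_i)(g_{c_i}(\mathbf{x})+\theta_i)$ for an OR gate with inputs $(c_i,\theta_i)$. With root $r$, $\Pr(Y=1\mid\mathbf{x})=1/(1+\exp(-g_r(\mathbf{x})))$. *)

From HB Require Import structures.
From mathcomp Require Import all_boot all_order all_algebra.
From mathcomp Require Import reals.
From mathcomp Require Import sequences exp.
Set Implicit Arguments. Unset Strict Implicit. Unset Printing Implicit Defensive.
Import Order.TTheory GRing.Theory Num.Theory.
Local Open Scope ring_scope.

(* OR-gate wires carry an
   index into a parameter vector theta : 'I_m -> R.  A DAG is represented by
   its tree unfolding; sharing of a node (and hence of its wire parameters)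
   is represented by repeating the subtree with the same parameter indices. *)
Inductive node (k m : nat) : Type :=
| Lit of 'I_k & bool
| And of seq (node k m)
| Or of seq (node k m * 'I_m).

Arguments Lit {k m}.
Arguments And {k m}.
Arguments Or {k m}.

Section Circuits.
Variables (k m : nat).
Local Notation node := (node k m).
Local Notation assign := {ffun 'I_k -> bool}.

Fixpoint eval (n : node) (a : assign) : bool :=
  match n with
  | Lit i b => a i == b
  | And cs => all (fun c => eval c a) cs
  | Or cs => has (fun p => eval p.1 a) cs
  end.

Fixpoint vars (n : node) : seq 'I_k :=
  match n with
  | Lit i _ => [:: i]
  | And cs => flatten (map vars cs)
  | Or cs => flatten (map (fun p => vars p.1) cs)
  end.

Definition disjoint_vars (c d : node) : bool :=
  all (fun v => v \notin vars d) (vars c).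

(* all AND gates decomposable, all OR gates deterministic *)
Fixpoint valid (n : node) : bool :=
  match n with
  | Lit _ _ => true
  | And cs => pairwise disjoint_vars cs && all valid cs
  | Or cs => [forall a : assign, (count (fun p => eval p.1 a) cs <= 1)%N]
             && all (fun p => valid p.1) cs
  end.

Definition is_or (n : node) : bool := if n is Or _ then true else false.

Variable R : realType.

Definition prob (x : 'I_k -> R) (n : node) : R :=
  \sum_(a : assign | eval n a) \prod_(i < k) (if a i then x i else 1 - x i).

Definition flow (x : 'I_k -> R) (n c : node) : R :=
  if prob x n == 0 then 0 else prob x c / prob x n.

(* weight function g_n(x); the inner fixpoints are plain list sums
   (g of AND = sum of children's g; g of OR = sum of flow * (g_c + theta)),
   written out explicitly so that the guard checker accepts the recursion *)
Fixpoint weight (theta : 'I_m -> R) (x : 'I_k -> R) (n : node) : R :=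
  match n with
  | Lit _ _ => 0
  | And cs =>
      (fix sumA (l : seq node) : R :=
         if l is c :: l' then weight theta x c + sumA l' else 0) cs
  | Or cs =>
      (fix sumO (l : seq (node * 'I_m)) : R :=
         if l is p :: l' then flow x n p.1 * (weight theta x p.1 + theta p.2) + sumO l'
         else 0) cs
  end.

Definition prob_Y1 (theta : 'I_m -> R) (x : 'I_k -> R) (r : node) : R :=
  1 / (1 + expR (- weight theta x r)).

End Circuits.

From HB Require Import structures.
From mathcomp Require Import all_boot all_order all_algebra.
From mathcomp Require Import reals.
From mathcomp Require Import sequences exp.
From Stdlib Require List.
Import Order.TTheory GRing.Theory Num.Theory.
Local Open Scope ring_scope.

(* Flows depend on x but not on theta, so unfolding the recursion of the
   weight function shows that g_r is a linear form in theta.  Its coordinates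
   in the standard basis, i.e. the weights obtained with theta equal to a unit
   vector, are the features; the parameters are used unchanged. *)

Section NodeInduction.
Variables (k m : nat) (P : node k m -> Prop).
Hypothesis P_Lit : forall i b, P (Lit i b).
Hypothesis P_And : forall cs, List.Forall P cs -> P (And cs).
Hypothesis P_Or : forall cs, List.Forall (fun p => P p.1) cs -> P (Or cs).

Fixpoint node_deep_ind (n : node k m) : P n :=
  match n with
  | Lit i b => P_Lit i b
  | And cs => P_And cs ((fix go l : List.Forall P l :=
      if l is c :: l' then List.Forall_cons c (node_deep_ind c) (go l')
      else List.Forall_nil P) cs)
  | Or cs => P_Or cs ((fix go l : List.Forall (fun p => P p.1) l :=
      if l is p :: l' then List.Forall_cons p (node_deep_ind p.1) (go l')
      else List.Forall_nil _) cs)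
  end.

End NodeInduction.

Lemma eq_big_Forall {R : nmodType} {I : Type} {s : seq I} {Q : I -> Prop}
    {F G : I -> R} :
  List.Forall Q s -> (forall i, Q i -> F i = G i) ->
  \sum_(i <- s) F i = \sum_(i <- s) G i.
Proof.
move=> Qs eqFG; elim: Qs => [|i s' Qi _ IH]; first by rewrite !big_nil.
by rewrite !big_cons eqFG // IH.
Qed.

Lemma sum_eq_natr_mul (R : pzSemiRingType) (m : nat) (theta : 'I_m -> R) i :
  \sum_j (i == j)%:R * theta j = theta i.
Proof.
rewrite (bigD1 i) //= eqxx mul1r big1 ?addr0 // => j /negbTE.
by rewrite eq_sym => ->; rewrite mul0r.
Qed.

Section WeightLinear.
Variables (R : realType) (k m : nat) (x : 'I_k -> R).

Lemma weight_And (theta : 'I_m -> R) (cs : seq (node k m)) :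
  weight theta x (And cs) = \sum_(c <- cs) weight theta x c.
Proof. by elim: cs => [|c cs IH] /=; rewrite ?big_nil // big_cons -IH. Qed.

Lemma weight_Or (theta : 'I_m -> R) (cs : seq (node k m * 'I_m)) :
  weight theta x (Or cs) =
  \sum_(p <- cs) flow x (Or cs) p.1 * (weight theta x p.1 + theta p.2).
Proof.
rewrite /=; move: (flow x (Or cs)) => f.
by elim: cs => [|p cs IH] /=; rewrite ?big_nil // big_cons IH.
Qed.

Definition unit_param (j : 'I_m) : 'I_m -> R := fun i => (i == j)%:R.

Lemma weight_linear (theta : 'I_m -> R) (n : node k m) :
  weight theta x n = \sum_j weight (unit_param j) x n * theta j.
Proof.
elim/node_deep_ind: n => [i b|cs IH|cs IH].
- by rewrite /= big1 // => j _; rewrite mul0r.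
- rewrite weight_And (eq_big_Forall IH (fun c eq_c => eq_c)) exchange_big.
  by apply: eq_bigr => j _; rewrite weight_And mulr_suml.
- set f := flow x (Or cs).
  rewrite weight_Or (eq_big_Forall (G := fun p =>
    \sum_j f p.1 * (weight (unit_param j) x p.1 + unit_param j p.2) * theta j)
    IH); last first.
    move=> p ->; rewrite -[theta p.2]sum_eq_natr_mul -big_split mulr_sumr /=.
    by apply: eq_bigr => j _; rewrite -mulrDl mulrA.
  rewrite exchange_big; apply: eq_bigr => j _.
  by rewrite weight_Or mulr_suml.
Qed.

End WeightLinear.

Theorem proposition2 (R : realType) (k m : nat) (C : node k m) :
  is_or C -> valid C ->
  exists (m' : nat) (phi : ('I_k -> R) -> 'I_m' -> R) (sigma : 'I_m' -> 'I_m),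
    forall (theta : 'I_m -> R) (x : 'I_k -> R),
      (forall i, 0 <= x i <= 1) ->
      prob_Y1 theta x C = 1 / (1 + expR (- \sum_(j < m') phi x j * theta (sigma j))).
Proof.
move=> _ _; exists m, (fun x j => weight (@unit_param R m j) x C), id.
by move=> theta x _; rewrite /prob_Y1 [weight theta x C]weight_linear.
Qed.
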